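(* Let $G=K\rtimes H$ be a Frobenius group with kernel $K$ and complement $H$, acting on $K$ by $\circ$, and suppose $|H|\neq|K|-1$. Then for any two distinct elements $u,v\in K$, $$|\{z\in K:\ z \text{ separates } u \text{ and } v\}|>|K|/2.$$
   Context: A Frobenius group is a finite group $G$ acting transitively on a finite set such that only the identity has more than one fixed point and some nontrivial element fixes a point; its kernel $K$ (identity plus fixed-point-free elements) is normal and a complement $H$ (a point stabilizer) satisfies $K\cap H=\{1\}$, $G=KH$. The action $\circ$ of $G$ on $K$: for $g=yh$ with $y\in K,h\in H$, $g\circ x=yhxh^{-1}$. For $u\neq v$ in $K$, $z\in K$ separates $u$ and $v$ if $v\circ z\notin H\circ(u\circ z)$, where $H\circ w=\{h\circ w:h\in H\}$. *)

From mathcomp Require Import all_boot all_fingroup all_solvable.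
Set Implicit Arguments. Unset Strict Implicit. Unset Printing Implicit Defensive.
Local Open Scope group_scope.

(* The action "o" of G = K H on K: for g = y h with y in K, h in H,
   g o x = y h x h^-1.  remgr K H g is the H-component h of g and
   divgr K H g = g h^-1 is the K-component y. *)
Definition frob_act (gT : finGroupType) (K H : {set gT}) (g x : gT) : gT :=
  divgr K H g * (remgr K H g * x * (remgr K H g)^-1).

Definition separates (gT : finGroupType) (K H : {set gT}) (u v z : gT) : bool :=
  frob_act K H v z \notin [set frob_act K H h (frob_act K H u z) | h in H].

From mathcomp Require Import all_boot all_fingroup all_solvable.
From mathcomp Require Import zify.
Set Implicit Arguments. Unset Strict Implicit. Unset Printing Implicit Defensive.
Local Open Scope group_scope.

(* In G = K ><| H the action o is left translation on K
   (x o z = x z for x in K) and conjugation on H (h o w = h w h^-1).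
   Hence z in K fails to separate u <> v exactly when
   v z = h (u z) h^-1 for some h in H, necessarily h <> 1.  Writing
   a = v u^-1 and w = u z this reads a w = h w h^-1, and since H acts
   semiregularly on K, for each h in H^# this equation has at most one
   solution w in K.  So the non-separating z number at most |H| - 1.
   Finally |H| divides |K| - 1 and differs from it, so 2|H| <= |K| - 1,
   which leaves more than |K|/2 separating elements. *)

Section FrobeniusAction.

Variables (gT : finGroupType) (K H : {group gT}).

Lemma frob_act_ker x z : x \in K -> frob_act K H x z = x * z.
Proof. by move=> Kx; rewrite /frob_act remgr1 // divgr_id // invg1 mulg1 mul1g. Qed.

Hypothesis tiKH : K :&: H = 1.

Lemma frob_act_compl h w : h \in H -> frob_act K H h w = h * w * h^-1.
Proof. by move=> Hh; rewrite /frob_act /divgr remgr_id // mulgV mul1g. Qed.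

Lemma not_separatesP u v z : u \in K -> v \in K -> z \in K ->
  reflect (exists2 h, h \in H & v * z = h * (u * z) * h^-1)
          (~~ separates K H u v z).
Proof.
move=> Ku Kv Kz; rewrite /separates negbK !frob_act_ker //.
by apply: (iffP imsetP) => -[h Hh E]; exists h => //; rewrite E frob_act_compl.
Qed.

End FrobeniusAction.

(* If h centralizes no nontrivial element of K, the equation
   a w = h w h^-1 has at most one solution w in K: two solutions w1, w2
   force w2^-1 w1 to commute with h. *)
Lemma regular_conj_eq_unique (gT : finGroupType) (K : {group gT}) (h a : gT) :
  'C_K[h] = 1 ->
  {in K &, forall w1 w2,
     a * w1 = h * w1 * h^-1 -> a * w2 = h * w2 * h^-1 -> w1 = w2}.
Proof.
move=> regh w1 w2 Kw1 Kw2 E1 E2.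
have a_def w : a * w = h * w * h^-1 -> a = h * w * h^-1 * w^-1.
  by move=> E; rewrite -E mulgK.
have comm_h : commute (w2^-1 * w1) h.
  have := etrans (esym (a_def _ E1)) (a_def _ E2).
  rewrite -!mulgA => /mulgI /(congr1 (fun t => w2^-1 * t * w1)).
  rewrite !mulgA mulVg mul1g -!mulgA mulVg mulg1 mulgA => E.
  by rewrite -[h]invgK; apply: commuteV.
have : w2^-1 * w1 \in 'C_K[h].
  by rewrite inE groupM ?groupV //; apply/cent1P.
by rewrite regh inE => /eqP /(canRL (mulKVg _)); rewrite mulg1.
Qed.

Lemma card_not_separating (gT : finGroupType) (K H : {group gT}) (u v : gT) :
  K :&: H = 1 -> semiregular K H -> u \in K -> v \in K -> u != v ->
  (#|[set z in K | ~~ separates K H u v z]| <= #|H^#|)%N.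
Proof.
move=> tiKH regH Ku Kv neuv.
pose sol h := odflt 1 [pick z in K | v * z == h * (u * z) * h^-1].
apply: leq_trans (leq_imset_card sol _); apply: subset_leq_card.
apply/subsetP=> z; rewrite inE => /andP[Kz /(not_separatesP tiKH Ku Kv Kz)[h Hh E]].
have nth : h != 1.
  by apply: contraNneq neuv => h1; move: E; rewrite h1 invg1 mul1g mulg1 => /mulIg ->.
have eq_a w : v * w = h * (u * w) * h^-1 -> (v * u^-1) * (u * w) = h * (u * w) * h^-1.
  by move=> <-; rewrite mulgA mulgKV.
apply/imsetP; exists h; first by rewrite !inE nth.
rewrite /sol; case: pickP => [z' /andP[Kz' /eqP E'] | /(_ z)]; last by rewrite Kz E eqxx.
have regh : 'C_K[h] = 1 by apply: regH; rewrite !inE nth.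
apply: (mulgI u).
by apply: (regular_conj_eq_unique regh _ _ (eq_a _ E) (eq_a _ E')); rewrite groupM.
Qed.

Lemma double_proper_divisor_le (d n : nat) :
  (0 < n)%N -> (d %| n)%N -> d != n -> (2 * d <= n)%N.
Proof.
move=> n_gt0 /dvdnP[k def_n] ne_dn; subst n.
have k_gt1 : (1 < k)%N by case: k n_gt0 ne_dn => [|[|k]]; rewrite ?mul1n ?eqxx.
by rewrite leq_mul2r k_gt1 orbT.
Qed.

Theorem lemma3 (gT : finGroupType) (G K H : {group gT}) :
  [Frobenius G = K ><| H] ->
  #|H| != (#|K| - 1)%N ->
  forall u v : gT, u \in K -> v \in K -> u != v ->
  (#|K| < 2 * #|[set z in K | separates K H u v z]|)%N.
Proof.
move=> frobG neH u v Ku Kv neuv.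
have [defG ntK _ _ _] := Frobenius_context frobG.
have [_ _ _ tiKH] := sdprodP defG.
have bound_nonsep := card_not_separating tiKH (Frobenius_reg_ker frobG) Ku Kv neuv.
have card_H : #|H| = (1 + #|H^#|)%N by rewrite (cardsD1 1 H) group1.
have partition : (#|[set z in K | separates K H u v z]|
                  + #|[set z in K | ~~ separates K H u v z]|)%N = #|K|.
  rewrite -(cardsID [set z | separates K H u v z] K).
  by congr (_ + _); apply: eq_card => z; rewrite !inE // andbC.
have K_gt1 : (1 < #|K|)%N by rewrite cardG_gt1.
have half_H : (2 * #|H| <= #|K|.-1)%N.
  apply: double_proper_divisor_le _ (Frobenius_dvd_ker1 frobG) _.
    by rewrite -subn1 subn_gt0.
  by rewrite -subn1.
lia.
Qed.
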